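(* Let $n\ge 4$. There is no 1-layer transformer with leftmost hard attention, rightmost hard attention, or average hard attention that performs function evaluation for domain $[n]$ in the ''consecutive positions, permuted keys'' presentation. This holds for any token embedding, position embedding, embedding dimension, MLP layers and unembedding. Here performing function evaluation means that, for every $f:[n]\to[n]$, every permutation $\pi$ of $[n]$ and every $i^*\in[n]$, the transformer outputs $f(i^* )$ on the input sequence $\pi(0),f(\pi(0)),\pi(1),f(\pi(1)),\dots,\pi(n-1),f(\pi(n-1)),i^*$.
   Context: Notation: $[n]=\{0,\dots,n-1\}$. Transformer model (encoder-only, no masking). A transformer consists of three parts. - An input embedding sends position $i$ with token $x_i$ to $\mathbf{w}(x_i)+\mathbf{p}(i)\in\mathbb{R}^d$. - One attention layer (possibly with residual connection) follows, together with any number of position-wise MLP layers. - The output is the index in $[n]$ maximizing $\mathbf{U}\mathbf{Y}[L-1]$, where $\mathbf{Y}[L-1]$ is the final vector at the last position and $\mathbf{U}\in\mathbb{R}^{n\times d}$. Attention computes the scores $s[i,j]=(\mathbf{W}^Q\mathbf{X}[i])\cdot(\mathbf{W}^K\mathbf{X}[j])/\sqrt{d_{hid}}$ and outputs $\sum_j\alpha[i,j]\mathbf{W}^V\mathbf{X}[j]$. Let $M_i$ be the set of $j$ maximizing $s[i,j]$. - Leftmost hard attention: $\alpha[i,j]=1$ iff $j=\min M_i$, and $0$ otherwise. - Rightmost hard attention: $\alpha[i,j]=1$ iff $j=\max M_i$, and $0$ otherwise. - Average hard attention: $\alpha[i,j]=1/|M_i|$ for $j\in M_i$, and $0$ otherwise.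 *)

From HB Require Import structures.
From mathcomp Require Import all_boot all_order all_algebra all_fingroup.
From mathcomp Require Import reals.
Set Implicit Arguments.
Unset Strict Implicit.
Unset Printing Implicit Defensive.
Import Order.TTheory GRing.Theory Num.Theory.
Local Open Scope ring_scope.

Inductive attn_kind := Leftmost | Rightmost | Average.

Section Transformer.
Variable R : realType.

Definition relu_cv (h : nat) (v : 'cV[R]_h) : 'cV[R]_h :=
  \col_i Num.max (v i 0) 0.

Record mlp_layer (d : nat) := MLPLayer {
  mlp_hid : nat;
  mlp_W1 : 'M[R]_(mlp_hid, d);
  mlp_b1 : 'cV[R]_mlp_hid;
  mlp_W2 : 'M[R]_(d, mlp_hid);
  mlp_b2 : 'cV[R]_d;
  mlp_res : bool }.

Definition mlp_apply (d : nat) (l : mlp_layer d) (x : 'cV[R]_d) : 'cV[R]_d :=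
  mlp_W2 l *m relu_cv (mlp_W1 l *m x + mlp_b1 l) + mlp_b2 l
  + (if mlp_res l then x else 0).

Record transformer (n : nat) := Transformer {
  tf_d : nat;
  tf_w : 'I_n -> 'cV[R]_tf_d;
  tf_p : 'I_(2 * n).+1 -> 'cV[R]_tf_d;
  tf_dh : nat;
  tf_WQ : 'M[R]_(tf_dh, tf_d);
  tf_WK : 'M[R]_(tf_dh, tf_d);
  tf_WV : 'M[R]_(tf_d, tf_d);
  tf_res : bool;
  tf_mlp : seq (mlp_layer tf_d);
  tf_U : 'M[R]_(n, tf_d) }.

Variable n : nat.
Local Notation L := (2 * n).+1.

Definition tf_X (T : transformer n) (x : 'I_L -> 'I_n) (i : 'I_L)
  : 'cV[R]_(tf_d T) := tf_w T (x i) + tf_p T i.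

Definition tf_score (T : transformer n) (x : 'I_L -> 'I_n) (i j : 'I_L) : R :=
  (((tf_WQ T *m tf_X T x i)^T *m (tf_WK T *m tf_X T x j)) 0 0)
    / Num.sqrt ((tf_dh T)%:R).

Definition tf_M (T : transformer n) (x : 'I_L -> 'I_n) (i : 'I_L) : {set 'I_L} :=
  [set j | [forall j', tf_score T x i j' <= tf_score T x i j]].

Definition tf_alpha (k : attn_kind) (T : transformer n) (x : 'I_L -> 'I_n)
  (i j : 'I_L) : R :=
  let M := tf_M T x i in
  match k with
  | Leftmost =>
      if (j \in M) && [forall j' in M, (j <= j')%N] then 1 else 0
  | Rightmost =>
      if (j \in M) && [forall j' in M, (j' <= j)%N] then 1 else 0
  | Average => if j \in M then (#|M|%:R)^-1 else 0
  end.

Definition tf_attn (k : attn_kind) (T : transformer n) (x : 'I_L -> 'I_n)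
  (i : 'I_L) : 'cV[R]_(tf_d T) :=
  \sum_j tf_alpha k T x i j *: (tf_WV T *m tf_X T x j)
  + (if tf_res T then tf_X T x i else 0).

Definition tf_logits (k : attn_kind) (T : transformer n) (x : 'I_L -> 'I_n)
  : 'cV[R]_n :=
  tf_U T *m foldl (fun v l => mlp_apply l v) (tf_attn k T x ord_max) (tf_mlp T).

Definition tf_outputs (k : attn_kind) (T : transformer n) (x : 'I_L -> 'I_n)
  (y : 'I_n) : Prop :=
  forall z : 'I_n, z != y -> tf_logits k T x z 0 < tf_logits k T x y 0.

End Transformer.

Definition fe_input (n : nat) (f : 'I_n -> 'I_n) (pi : {perm 'I_n}) (istar : 'I_n)
  : 'I_(2 * n).+1 -> 'I_n :=
  fun j => nth istar
    (flatten [seq [:: pi k; f (pi k)] | k <- enum 'I_n] ++ [:: istar]) j.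

Definition performs_fe (R : realType) (n : nat) (k : attn_kind)
  (T : transformer R n) : Prop :=
  forall (f : 'I_n -> 'I_n) (pi : {perm 'I_n}) (istar : 'I_n),
    tf_outputs k T (fe_input f pi istar) (f istar).

From mathcomp Require Import all_boot all_order all_algebra all_fingroup.
From mathcomp Require Import reals.
From mathcomp Require Import zify.
Set Implicit Arguments.
Unset Strict Implicit.
Unset Printing Implicit Defensive.
Import Order.TTheory GRing.Theory Num.Theory.
Local Open Scope ring_scope.

(* At the last position the query token is q, so the score of a position
   depends only on the position and its token: the value slot of the m-th pair
   scores tau m t when it holds t.  Taking pi = (m q) puts the pair of q in
   slot m, so the token of slot m is the answer and must be visible to the
   attention.  Let C be the maximum of tau, attained at (k0, t0).  If for some
   m <> k0 two tokens have tau m _ < C, slot k0 holding t0 outscores slot m and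
   switching between them is invisible.  Otherwise, for m <> k0, all tokens but
   one reach C, so as n >= 4 two tokens reach C in any one or two such slots.
   Leftmost (rightmost) attention then prefers an earlier (later) slot at
   score C to slot m, and average attention cannot see two slots at score C
   exchanging their tokens. *)

Section ArgmaxSet.
Variables (d : Order.disp_t) (T : porderType d) (I : finType).

Definition argmax_set (s : I -> T) : {set I} :=
  [set p | [forall p', (s p' <= s p)%O]].

Lemma argmax_set_sub (s s' : I -> T) (p0 : I) : s p0 = s' p0 ->
  (forall p, s p != s' p -> (s p < s p0)%O /\ (s' p < s p0)%O) ->
  argmax_set s \subset argmax_set s'.
Proof.
move=> E0 dominated; apply/subsetP => p; rewrite !inE => /forallP max_p.
have Ep : s p = s' p.
  apply/eqP; apply: contraT => /dominated [lt_p _].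
  by have := lt_le_trans lt_p (max_p p0); rewrite ltxx.
apply/forallP => p'; rewrite -Ep.
case: (eqVneq (s p') (s' p')) => [<-|/dominated [_ lt_p']]; first exact: max_p.
exact: ltW (lt_le_trans lt_p' (max_p p0)).
Qed.

Lemma argmax_set_eq (s s' : I -> T) (p0 : I) : s p0 = s' p0 ->
  (forall p, s p != s' p -> (s p < s p0)%O /\ (s' p < s p0)%O) ->
  argmax_set s = argmax_set s'.
Proof.
move=> E0 dominated; apply/eqP; rewrite eqEsubset (argmax_set_sub E0 dominated) /=.
apply: (argmax_set_sub (esym E0)) => p; rewrite eq_sym -E0 => /dominated [].
by split.
Qed.

End ArgmaxSet.

Lemma exists_two_notin (I : finType) (A : {set I}) : (#|A| + 2 <= #|I|)%N ->
  exists a b, [/\ a != b, a \notin A & b \notin A].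
Proof.
move=> le_A; have /card_gt1P [a [b [Ha Hb ne_ab]]] : (1 < #|~: A|)%N.
  by have := cardsC A; lia.
by exists a, b; move: Ha Hb; rewrite !inE.
Qed.

Section FlattenPairs.
Variables (A B : Type) (g h h' : A -> B).

Lemma size_flatten_pairs (s : seq A) :
  size (flatten [seq [:: g a; h a] | a <- s]) = (2 * size s)%N.
Proof. by elim: s => [|a s IH] //=; rewrite IH mulnS. Qed.

Lemma nth_flatten_pairs_odd (b0 : B) (a0 : A) (s : seq A) (r : seq B) k :
  (k < size s)%N ->
  nth b0 (flatten [seq [:: g a; h a] | a <- s] ++ r) (2 * k).+1 = h (nth a0 s k).
Proof.
elim: s k => [|a s IH] [|k] // lt_k.
by rewrite (_ : (2 * k.+1).+1 = (2 * k).+3) ?mulnS //; apply: IH.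
Qed.

Lemma nth_flatten_pairs_even (b0 : B) (s : seq A) (r : seq B) j : ~~ odd j ->
  nth b0 (flatten [seq [:: g a; h a] | a <- s] ++ r) j =
  nth b0 (flatten [seq [:: g a; h' a] | a <- s] ++ r) j.
Proof.
elim: s j => [|a s IH] [|[|j]] //= even_j.
by apply: IH; rewrite negbK in even_j.
Qed.

End FlattenPairs.

Fact value_pos_subproof n (j : 'I_n) : ((2 * j).+1 < (2 * n).+1)%N.
Proof. by rewrite ltnS ltn_mul2l ltn_ord. Qed.

Definition value_pos n (j : 'I_n) : 'I_(2 * n).+1 :=
  Ordinal (value_pos_subproof j).

Lemma value_pos_inj n : injective (@value_pos n).
Proof. by move=> j j' /(congr1 val) /= E; apply: val_inj => /=; lia. Qed.

Section FunctionEvaluationInput.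
Variables (n : nat) (pi : {perm 'I_n}) (q : 'I_n).

Lemma fe_input_last f : fe_input f pi q ord_max = q.
Proof.
by rewrite /fe_input nth_cat size_flatten_pairs size_enum_ord ltnn subnn.
Qed.

Lemma fe_input_value f j : fe_input f pi q (value_pos j) = f (pi j).
Proof.
by rewrite /fe_input (nth_flatten_pairs_odd _ _ _ j) ?size_enum_ord ?nth_ord_enum.
Qed.

Lemma fe_input_neq f f' p : fe_input f pi q p != fe_input f' pi q p ->
  exists2 j, p = value_pos j & f (pi j) != f' (pi j).
Proof.
move=> neq_p; have odd_p : odd p.
  by apply: contraNT neq_p => even_p; apply/eqP; apply: nth_flatten_pairs_even.
have p_def := odd_double_half p; rewrite odd_p -muln2 in p_def.
have lt_half : (p./2 < n)%N by have := ltn_ord p; lia.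
pose j := Ordinal lt_half.
have p_eq : p = value_pos j by apply: val_inj => /=; lia.
by exists j; move: neq_p; rewrite p_eq ?fe_input_value.
Qed.

End FunctionEvaluationInput.

Section HardAttention.
Variables (R : realType) (n : nat) (T : transformer R n).
Local Notation L := (2 * n).+1.
Implicit Types (x : 'I_L -> 'I_n) (i p : 'I_L) (k : attn_kind).

Definition token_score i (q : 'I_n) p (t : 'I_n) : R :=
  (((tf_WQ T *m (tf_w T q + tf_p T i))^T *m (tf_WK T *m (tf_w T t + tf_p T p))) 0 0)
    / Num.sqrt ((tf_dh T)%:R).

Lemma tf_scoreE x i p : tf_score T x i p = token_score i (x i) p (x p).
Proof. by []. Qed.

Lemma tf_score_neq x x' i p : x i = x' i ->
  tf_score T x i p != tf_score T x' i p -> x p != x' p.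
Proof. by move=> Ei; apply: contra => /eqP Ep; rewrite !tf_scoreE Ei Ep. Qed.

Lemma tf_ME x i : tf_M T x i = argmax_set (tf_score T x i).
Proof. by []. Qed.

Lemma tf_alpha_notin k x i p : p \notin tf_M T x i -> tf_alpha k T x i p = 0.
Proof. by move=> /negbTE notin_p; rewrite /tf_alpha; case: k; rewrite notin_p. Qed.

Lemma tf_alpha_leftmost x i p p' :
  p' \in tf_M T x i -> (p' < p)%N -> tf_alpha Leftmost T x i p = 0.
Proof.
move=> in_p' lt_p; rewrite /tf_alpha; case: ifP => // /andP [_].
by move=> /forall_inP /(_ _ in_p'); rewrite leqNgt lt_p.
Qed.

Lemma tf_alpha_rightmost x i p p' :
  p' \in tf_M T x i -> (p < p')%N -> tf_alpha Rightmost T x i p = 0.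
Proof.
move=> in_p' lt_p; rewrite /tf_alpha; case: ifP => // /andP [_].
by move=> /forall_inP /(_ _ in_p'); rewrite leqNgt lt_p.
Qed.

Lemma tf_attn_eq k x x' i : x i = x' i -> tf_M T x i = tf_M T x' i ->
  (forall p, x p != x' p -> tf_alpha k T x i p = 0) ->
  tf_attn k T x i = tf_attn k T x' i.
Proof.
move=> Ei EM alpha0; rewrite /tf_attn /tf_X Ei; congr (_ + _).
apply: eq_bigr => p _; rewrite [in RHS]/tf_alpha -EM -/(tf_alpha k T x i p).
by case: (eqVneq (x p) (x' p)) => [->|/alpha0 ->] //; rewrite !scale0r.
Qed.

Lemma tf_attn_average_swap x x' i p1 p2 : x i = x' i ->
  tf_M T x i = tf_M T x' i -> p1 != p2 ->
  tf_alpha Average T x i p1 = tf_alpha Average T x i p2 ->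
  x p1 = x' p2 -> x p2 = x' p1 -> (forall p, p != p1 -> p != p2 -> x p = x' p) ->
  tf_attn Average T x i = tf_attn Average T x' i.
Proof.
move=> Ei EM ne_p Ealpha E1 E2 Eo; rewrite /tf_attn /tf_X Ei; congr (_ + _).
rewrite (bigD1 p1) // (bigD1 p1 (P := predT)) //=.
rewrite (bigD1 p2) 1?eq_sym // (bigD1 p2 (P := fun p => predT p && (p != p1))) /=;
  last by rewrite eq_sym.
rewrite !addrA; congr (_ + _).
  move: Ealpha; rewrite /tf_alpha /= -EM => ->.
  rewrite -E1 -E2 -!scalerDr !mulmxDr addrACA [in RHS]addrACA.
  by rewrite [_ *m tf_w T _ + _]addrC [_ *m tf_p T _ + _]addrC.
by rewrite /tf_alpha -EM; apply: eq_bigr => p /andP [ne1 ne2]; rewrite Eo.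
Qed.

Lemma tf_outputs_eq_attn k x x' y y' :
  tf_attn k T x ord_max = tf_attn k T x' ord_max ->
  tf_outputs k T x y -> tf_outputs k T x' y' -> y = y'.
Proof.
move=> Eattn out_y out_y'; apply/eqP; apply: contraT => ne_y.
have ne_y' : y' != y by rewrite eq_sym.
have := out_y y' ne_y'; have := out_y' y ne_y.
rewrite /tf_logits Eattn => lt1 lt2.
by have := lt_trans lt1 lt2; rewrite ltxx.
Qed.

End HardAttention.

Definition slot_score (R : realType) n (T : transformer R n) (q m t : 'I_n) : R :=
  token_score T ord_max q (value_pos m) t.

Section Slots.
Variables (R : realType) (n : nat) (T : transformer R n) (q : 'I_n).
Local Notation tau := (slot_score T q).

(* Pair [j] of the input is [(pi j, v j)] with [pi = tperm m q]; as [pi] is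
   an involution, this is the input for [f := v \o pi], with answer [v m]. *)
Definition slot_input (m : 'I_n) (v : 'I_n -> 'I_n) :=
  fe_input (v \o tperm m q) (tperm m q) q.

Lemma slot_input_last m v : slot_input m v ord_max = q.
Proof. exact: fe_input_last. Qed.

Lemma slot_input_value m v j : slot_input m v (value_pos j) = v j.
Proof. by rewrite /slot_input fe_input_value /= tpermK. Qed.

Lemma slot_input_neq m v v' p : slot_input m v p != slot_input m v' p ->
  exists2 j, p = value_pos j & v j != v' j.
Proof. by case/fe_input_neq => j -> /=; rewrite tpermK; exists j. Qed.

Lemma slot_input_score m v j :
  tf_score T (slot_input m v) ord_max (value_pos j) = tau j (v j).
Proof. by rewrite tf_scoreE slot_input_last slot_input_value. Qed.

Lemma slot_input_score_neq m v v' p :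
  tf_score T (slot_input m v) ord_max p != tf_score T (slot_input m v') ord_max p ->
  slot_input m v p != slot_input m v' p.
Proof. by apply: tf_score_neq; rewrite !slot_input_last. Qed.

Lemma slot_input_outputs k m v :
  performs_fe k T -> tf_outputs k T (slot_input m v) (v m).
Proof. by move=> HT; have := HT (v \o tperm m q) (tperm m q) q; rewrite /= tpermR. Qed.

Definition pin_slot (m b t : 'I_n) (j : 'I_n) : 'I_n := if j == m then b else t.

Lemma pin_slot_attn k m t a a' : performs_fe k T ->
  tf_M T (slot_input m (pin_slot m a t)) ord_max =
    tf_M T (slot_input m (pin_slot m a' t)) ord_max ->
  (value_pos m \in tf_M T (slot_input m (pin_slot m a t)) ord_max ->
    tf_alpha k T (slot_input m (pin_slot m a t)) ord_max (value_pos m) = 0) ->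
  a = a'.
Proof.
move=> HT EM alpha_m; have pin_m b : pin_slot m b t m = b by rewrite /pin_slot eqxx.
rewrite -(pin_m a) -(pin_m a').
apply: (tf_outputs_eq_attn _ (slot_input_outputs HT) (slot_input_outputs HT)).
apply: tf_attn_eq EM _; first by rewrite !slot_input_last.
move=> p /slot_input_neq [j ->]; have [-> _|ne_jm] := eqVneq j m; last first.
  by rewrite /pin_slot (negbTE ne_jm) eqxx.
set x := slot_input m (pin_slot m a t).
by have [/alpha_m|/tf_alpha_notin] := boolP (value_pos m \in tf_M T x ord_max).
Qed.

Lemma slot_below_max k j m t a a' : performs_fe k T -> m != j ->
  tau m a < tau j t -> tau m a' < tau j t -> a = a'.
Proof.
move=> HT ne_mj lt_a lt_a'.
have pin_j b : pin_slot m b t j = t by rewrite /pin_slot eq_sym (negbTE ne_mj).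
have diff b b' p : slot_input m (pin_slot m b t) p != slot_input m (pin_slot m b' t) p ->
    p = value_pos m.
  case/slot_input_neq => i ->; have [-> //|ne_im] := eqVneq i m.
  by rewrite /pin_slot (negbTE ne_im) eqxx.
apply: (pin_slot_attn (m := m) (t := t) HT).
  rewrite !tf_ME; apply: (argmax_set_eq (p0 := value_pos j)).
    by rewrite !slot_input_score !pin_j.
  move=> p /slot_input_score_neq /diff ->.
  rewrite !slot_input_score !pin_j /pin_slot !eqxx.
  by split.
move=> in_m; exfalso; move: in_m; rewrite tf_ME inE => /forallP /(_ (value_pos j)).
by rewrite !slot_input_score pin_j /pin_slot eqxx leNgt lt_a.
Qed.

Lemma slot_tied k j m t a a' : performs_fe k T -> m != j ->
  tau m a = tau j t -> tau m a' = tau j t ->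
  (forall x, value_pos j \in tf_M T x ord_max ->
     tf_alpha k T x ord_max (value_pos m) = 0) ->
  a = a'.
Proof.
move=> HT ne_mj Ea Ea' alpha_m.
have pin_j b : pin_slot m b t j = t by rewrite /pin_slot eq_sym (negbTE ne_mj).
have pin_m b : pin_slot m b t m = b by rewrite /pin_slot eqxx.
apply: (pin_slot_attn (m := m) (t := t) HT).
  rewrite !tf_ME; apply: (argmax_set_eq (p0 := ord_max)).
    by rewrite !tf_scoreE !slot_input_last.
  move=> p ne_score; have [i Ep _] := slot_input_neq (slot_input_score_neq ne_score).
  move: ne_score; rewrite Ep !slot_input_score.
  have [->|ne_im] := eqVneq i m; first by rewrite !pin_m Ea Ea' eqxx.
  by rewrite /pin_slot (negbTE ne_im) eqxx.
move=> in_m; apply: alpha_m; move: in_m; rewrite !tf_ME !inE.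
by rewrite !slot_input_score pin_j pin_m Ea.
Qed.

Lemma slot_swap m1 m2 a b : performs_fe Average T -> m1 != m2 ->
  tau m1 a = tau m1 b -> tau m2 a = tau m2 b -> tau m1 a = tau m2 b -> a = b.
Proof.
move=> HT ne12 E1 E2 E12.
pose v (c d : 'I_n) i := if i == m1 then c else if i == m2 then d else a.
have v1 c d : v c d m1 = c by rewrite /v eqxx.
have v2 c d : v c d m2 = d by rewrite /v eq_sym (negbTE ne12) eqxx.
have vo c d i : i != m1 -> i != m2 -> v c d i = a.
  by move=> ne1 ne2; rewrite /v (negbTE ne1) (negbTE ne2).
have diff p : slot_input m1 (v a b) p != slot_input m1 (v b a) p ->
    exists2 i, p = value_pos i & (i == m1) || (i == m2).
  case/slot_input_neq => i -> ne_i; exists i => //.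
  apply: contraR ne_i; rewrite negb_or => /andP [ne1 ne2].
  by rewrite !vo.
have Escore p : tf_score T (slot_input m1 (v a b)) ord_max p =
                tf_score T (slot_input m1 (v b a)) ord_max p.
  case: (eqVneq (slot_input m1 (v a b) p) (slot_input m1 (v b a) p)).
    by rewrite !tf_scoreE !slot_input_last => ->.
  case/diff => i -> /orP [] /eqP ->; rewrite !slot_input_score.
    by rewrite !v1.
  by rewrite !v2.
have EM : tf_M T (slot_input m1 (v a b)) ord_max = tf_M T (slot_input m1 (v b a)) ord_max.
  by rewrite !tf_ME; apply: (argmax_set_eq (p0 := ord_max)) => // p; rewrite Escore eqxx.
have out_ab := slot_input_outputs (m := m1) (v := v a b) HT; rewrite v1 in out_ab.
have out_ba := slot_input_outputs (m := m1) (v := v b a) HT; rewrite v1 in out_ba.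
apply: (tf_outputs_eq_attn _ out_ab out_ba).
apply: (tf_attn_average_swap (p1 := value_pos m1) (p2 := value_pos m2) _ EM).
- by rewrite !slot_input_last.
- by apply: contra ne12 => /eqP /value_pos_inj ->.
- by rewrite /tf_alpha !tf_ME !inE !slot_input_score v1 v2 E12.
- by rewrite !slot_input_value v1 v2.
- by rewrite !slot_input_value v1 v2.
move=> p ne1 ne2; apply/eqP; apply: contraT => /diff [i Ep /orP [] /eqP Ei].
  by rewrite Ep Ei eqxx in ne1.
by rewrite Ep Ei eqxx in ne2.
Qed.

End Slots.

Section AtMostOneBelowMax.
Variables (R : realDomainType) (I J : finType) (tau : I -> J -> R) (k0 : I) (t0 : J).
Hypothesis tau_max : forall m t, tau m t <= tau k0 t0.
Hypothesis below_max_uniq : forall m a a', m != k0 ->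
  tau m a < tau k0 t0 -> tau m a' < tau k0 t0 -> a = a'.

Definition below_max (m : I) : {set J} := [set t | tau m t < tau k0 t0].

Lemma card_below_max m : m != k0 -> (#|below_max m| <= 1)%N.
Proof.
move=> ne_m; apply/card_le1_eqP => a a'; rewrite !inE => lt_a lt_a'.
exact: below_max_uniq ne_m lt_a' lt_a.
Qed.

Lemma max_notin_below_max m t : t \notin below_max m -> tau m t = tau k0 t0.
Proof. by rewrite inE -leNgt => ge_t; apply/eqP; rewrite eq_le tau_max. Qed.

Lemma max_attained m : (1 < #|J|)%N -> exists g, tau m g = tau k0 t0.
Proof.
move=> J_gt1; have [->|ne_m] := eqVneq m k0; first by exists t0.
have /card_gt0P [g] : (0 < #|~: below_max m|)%N.
  by have := cardsC (below_max m); have := card_below_max ne_m; lia.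
by rewrite inE => /max_notin_below_max; exists g.
Qed.

Lemma max_attained_twice m1 m2 : m1 != k0 -> m2 != k0 -> (4 <= #|J|)%N ->
  exists a b, [/\ a != b, tau m1 a = tau k0 t0, tau m2 a = tau k0 t0,
                 tau m1 b = tau k0 t0 & tau m2 b = tau k0 t0].
Proof.
move=> ne1 ne2 J_ge4.
have card_U : (#|below_max m1 :|: below_max m2| + 2 <= #|J|)%N.
  have := cardsU (below_max m1) (below_max m2).
  by have := card_below_max ne1; have := card_below_max ne2; lia.
have [a [b [ne_ab]]] := exists_two_notin card_U.
rewrite !in_setU !negb_or => /andP [a1 a2] /andP [b1 b2].
by exists a, b; split; rewrite // max_notin_below_max.
Qed.

End AtMostOneBelowMax.

Section Impossibility.
Variables (R : realType) (n : nat) (T : transformer R n) (q k0 t0 : 'I_n).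
Hypothesis n_ge4 : (4 <= n)%N.
Local Notation tau := (slot_score T q).
Hypothesis tau_max : forall m t, tau m t <= tau k0 t0.

Let card_ge4 : (4 <= #|'I_n|)%N. Proof. by rewrite card_ord. Qed.

Lemma hard_attn_no_fe k j : performs_fe k T ->
  (forall m x, m != j -> value_pos j \in tf_M T x ord_max ->
     tf_alpha k T x ord_max (value_pos m) = 0) ->
  False.
Proof.
move=> HT shadow.
have below_uniq m a a' := @slot_below_max _ _ T q k k0 m t0 a a' HT.
have [m [_ [_ m_out _]]] : exists m m',
    [/\ m != m', m \notin [set j; k0] & m' \notin [set j; k0]].
  by apply: exists_two_notin; rewrite cards2 card_ord; have := leq_b1 (j != k0); lia.
move: m_out; rewrite !inE negb_or => /andP [ne_mj ne_mk0].
have [a [a' [ne_a Ea _ Ea' _]]] :=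
  max_attained_twice tau_max below_uniq ne_mk0 ne_mk0 card_ge4.
have [g Eg] := max_attained tau_max below_uniq j (ltnW (ltnW card_ge4)).
move/eqP: ne_a; apply.
apply: (slot_tied (q := q) (t := g) HT ne_mj _ _ (shadow m ^~ ne_mj)).
  by rewrite Ea Eg.
by rewrite Ea' Eg.
Qed.

Lemma average_attn_no_fe : performs_fe Average T -> False.
Proof.
move=> HT.
have below_uniq m a a' := @slot_below_max _ _ T q Average k0 m t0 a a' HT.
have [m1 [m2 [ne12 m1_out m2_out]]] : exists m1 m2,
    [/\ m1 != m2, m1 \notin [set k0] & m2 \notin [set k0]].
  by apply: exists_two_notin; rewrite cards1 card_ord; lia.
rewrite !inE in m1_out m2_out.
have [a [b [ne_ab Ea1 Ea2 Eb1 Eb2]]] :=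
  max_attained_twice tau_max below_uniq m1_out m2_out card_ge4.
move/eqP: ne_ab; apply; apply: (slot_swap (q := q) HT ne12).
- by rewrite Ea1 Eb1.
- by rewrite Ea2 Eb2.
- by rewrite Ea1 Eb2.
Qed.

End Impossibility.

Theorem theorem6 (R : realType) (n : nat) (hn : (4 <= n)%N) (k : attn_kind)
  (T : transformer R n) : ~ performs_fe k T.
Proof.
move=> HT.
have n_gt0 : (0 < n)%N by lia.
have lt_last : (n.-1 < n)%N by lia.
pose first := Ordinal n_gt0; pose last := Ordinal lt_last.
have [[k0 t0] _ tau_max] :=
  @arg_maxP _ _ _ (first, first) predT (fun mt => slot_score T first mt.1 mt.2) isT.
have {}tau_max m t : slot_score T first m t <= slot_score T first k0 t0.
  exact: tau_max (m, t) isT.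
case: k HT => HT.
- apply: (hard_attn_no_fe hn tau_max HT (j := first)) => m x ne_m.
  move/tf_alpha_leftmost; apply; move: ne_m; rewrite -val_eqE /=; lia.
- apply: (hard_attn_no_fe hn tau_max HT (j := last)) => m x ne_m.
  move/tf_alpha_rightmost; apply; move: ne_m; rewrite -val_eqE /=.
  by have := ltn_ord m; lia.
- exact: average_attn_no_fe hn tau_max HT.
Qed.
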